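(* Let $E$ be a normed space over $\mathbb{K}\in\{\mathbb{R},\mathbb{C}\}$ and let $P:E\to\mathbb{K}$ be a polynomial on $E$ (not assumed continuous), i.e. $P=P_0+P_1+\cdots+P_n$ for some $n\in\mathbb{N}$, where $P_0$ is a constant function and each $P_k$ ($1\le k\le n$) is a $k$-homogeneous polynomial. Then $P$ is continuous if and only if $P(K)$ is compact for every compact set $K\subset E$.
   Context: A map $Q:E\to\mathbb{K}$ is a $k$-homogeneous polynomial if there is a symmetric $k$-linear mapping $L:E^k\to\mathbb{K}$ (not necessarily continuous) with $Q(x)=L(x,\ldots,x)$ for all $x\in E$. *)

From HB Require Import structures.
From mathcomp Require Import all_boot all_order all_algebra all_fingroup.
From mathcomp Require Import all_classical all_reals all_analysis.
From mathcomp Require Export complex.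
Set Implicit Arguments. Unset Strict Implicit. Unset Printing Implicit Defensive.
Import Order.TTheory GRing.Theory Num.Theory.
Import numFieldNormedType.Exports.
Local Open Scope ring_scope.
Local Open Scope classical_set_scope.

Definition upd_arg (E : Type) (k : nat) (v : 'I_k -> E) (i : 'I_k) (x : E) : 'I_k -> E :=
  fun j => if j == i then x else v j.

Definition multilinear (K : numFieldType) (E : lmodType K) (k : nat)
  (L : ('I_k -> E) -> K) : Prop :=
  forall (v : 'I_k -> E) (i : 'I_k) (a : K) (x y : E),
    L (upd_arg v i (a *: x + y)) = a * L (upd_arg v i x) + L (upd_arg v i y).

Definition symmetric_map (K : Type) (E : Type) (k : nat)
  (L : ('I_k -> E) -> K) : Prop :=
  forall (s : 'S_k) (v : 'I_k -> E), L (fun j => v (s j)) = L v.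

Definition homogeneous_poly (K : numFieldType) (E : lmodType K) (k : nat)
  (Q : E -> K) : Prop :=
  exists L : ('I_k -> E) -> K,
    [/\ multilinear L, symmetric_map L & forall x, Q x = L (fun _ => x)].

Definition is_polynomial (K : numFieldType) (E : lmodType K) (P : E -> K) : Prop :=
  exists (n : nat) (c : K) (Q : nat -> E -> K),
    (forall k, (1 <= k <= n)%N -> homogeneous_poly k (Q k)) /\
    (forall x, P x = c + \sum_(1 <= k < n.+1) Q k x).

Definition poly_cont_iff_compact_images (K : numFieldType) : Prop :=
  forall (E : normedModType K) (P : E -> K),
    is_polynomial P ->
    (continuous P <-> (forall A : set E, compact A -> compact (P @` A))).

(* Along every affine line t |-> a + t h, a polynomial of degree n is a
   polynomial of degree at most n in t.  If P is bounded by M on a ball around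
   a, Lagrange interpolation at the nodes 0, 1, ..., n of suitably rescaled
   lines through a yields |P y - P a| <= M om(|y - a|) for a fixed modulus om
   vanishing at 0, so P is continuous at a.  Otherwise P is unbounded on every
   ball around a, and there are x_m -> a with |P x_m| > m; then {a} U {x_m} is
   compact while its image is unbounded. *)
From HB Require Import structures.
From mathcomp Require Import all_boot all_order all_algebra all_fingroup.
From mathcomp Require Import all_classical all_reals all_analysis.
From mathcomp Require Import complex.
Set Implicit Arguments. Unset Strict Implicit. Unset Printing Implicit Defensive.
Import Order.TTheory GRing.Theory Num.Theory.
Import numFieldNormedType.Exports.
Local Open Scope ring_scope.
Local Open Scope classical_set_scope.

Section PolynomialFunctions.
Variable K : numFieldType.

Definition polyfun_le (d : nat) (g : K -> K) :=
  exists2 p : {poly K}, (size p <= d.+1)%N & forall t, g t = p.[t].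

Lemma eq_polyfun_le d (g g' : K -> K) :
  g =1 g' -> polyfun_le d g -> polyfun_le d g'.
Proof. by move=> gg' [p sp gp]; exists p => // t; rewrite -gg'. Qed.

Lemma polyfun_le_widen d d' g : (d <= d')%N -> polyfun_le d g -> polyfun_le d' g.
Proof. by move=> dd' [p sp gp]; exists p => //; apply: leq_trans sp _. Qed.

Lemma polyfun_le_cst d c : polyfun_le d (fun=> c).
Proof.
exists c%:P => [|t]; last by rewrite hornerC.
exact: leq_trans (size_polyC_leq1 _) _.
Qed.

Lemma polyfun_leD d g1 g2 :
  polyfun_le d g1 -> polyfun_le d g2 -> polyfun_le d (fun t => g1 t + g2 t).
Proof.
move=> [p1 s1 e1] [p2 s2 e2]; exists (p1 + p2) => [|t].
  by rewrite (leq_trans (size_polyD _ _)) // geq_max s1 s2.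
by rewrite hornerD -e1 -e2.
Qed.

Lemma polyfun_le_mulX d g : polyfun_le d g -> polyfun_le d.+1 (fun t => t * g t).
Proof.
move=> [p sp gp]; exists (p * 'X) => [|t]; last by rewrite hornerMX gp mulrC.
by rewrite (leq_trans (size_polyMleq _ _)) // size_polyX addn2.
Qed.

Lemma polyfun_le_sum d (I : eqType) (r : seq I) (P : pred I) (g : I -> K -> K) :
  {in r, forall i, P i -> polyfun_le d (g i)} ->
  polyfun_le d (fun t => \sum_(i <- r | P i) g i t).
Proof.
elim: r => [|i r IHr] gd.
  by apply: eq_polyfun_le (polyfun_le_cst d 0) => t; rewrite big_nil.
apply: (@eq_polyfun_le _ (fun t => (if P i then g i t else 0)
                                   + \sum_(j <- r | P j) g j t)).
  by move=> t; rewrite big_cons; case: (P i); rewrite ?add0r.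
apply: polyfun_leD; last by apply: IHr => j jr; apply: gd; rewrite inE jr orbT.
case Pi: (P i); last exact: polyfun_le_cst.
exact: gd (mem_head _ _) Pi.
Qed.

Lemma horner_continuous (p : {poly K}) : continuous (horner p).
Proof.
elim/poly_ind: p => [|p c IHp] x.
  rewrite (_ : horner 0 = fun=> 0); first exact: (@cvg_cst _ _ _ (nbhs x) _).
  by apply/funext => y; rewrite horner0.
rewrite (_ : horner _ = fun y => p.[y] * y + c); last first.
  by apply/funext => y; rewrite hornerMXaddC.
apply: (@cvgD _ _ _ (nbhs x)); last exact: (@cvg_cst _ _ _ (nbhs x) _).
by apply: (@cvgM _ _ (nbhs x)); [exact: IHp | exact: cvg_id].
Qed.

(* The modulus is om t = \sum_i |l_i(t) - l_i(0)| for the Lagrange basis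
   l_0, ..., l_n at the nodes 0, 1, ..., n. *)
Lemma polyfun_le_increment_bound n : exists om : K -> K,
  [/\ om t @[t --> 0] --> 0, forall t, 0 <= om t &
      forall g M, polyfun_le n g -> (forall i : 'I_n.+1, `|g i%:R| <= M) ->
      forall t, `|g t - g 0| <= M * om t].
Proof.
pose l i := tnth (lagrange n.+1 (fun k : nat => k%:R : K)) i.
have natr_inj : injective (fun k : nat => k%:R : K).
  by move=> j k /eqP; rewrite eqr_nat => /eqP.
have interp (p : {poly K}) : (size p <= n.+1)%N ->
    forall t, p.[t] = \sum_(i < n.+1) p.[i%:R] * (l i).[t].
  move=> sp t; rewrite {1}(lagrange_gen (ltn0Sn n) natr_inj sp) horner_sum.
  by apply: eq_bigr => i _; rewrite hornerM hornerC.
exists (fun t => \sum_(i < n.+1) `|(l i).[t] - (l i).[0]|); split.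
- have sum0 : \sum_(i < n.+1) `|(l i).[0] - (l i).[0]| = 0 :> K.
    by rewrite big1 // => i _; rewrite subrr normr0.
  suff : (\sum_(i < n.+1) `|(l i).[t] - (l i).[0]|) @[t --> 0] -->
         \sum_(i < n.+1) `|(l i).[0] - (l i).[0]| by rewrite sum0.
  apply: (@cvg_big _ _ _ _ _ add_continuous _ (nbhs (0 : K))) => i _.
  by apply: cvg_norm; apply: cvgB; [exact: horner_continuous | exact: cvg_cst].
- by move=> t; apply: sumr_ge0.
- move=> g M [p sp gp] gM t.
  rewrite !gp (interp p sp t) (interp p sp 0) -sumrB mulr_sumr.
  apply: le_trans (ler_norm_sum _ _ _) (ler_sum _ _) => i _.
  rewrite -mulrBr normrM ler_wpM2r // -gp; exact: gM.
Qed.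

End PolynomialFunctions.

Section MultilinearAlongLines.
Variables (K : numFieldType) (E : lmodType K) (k : nat) (L : ('I_k -> E) -> K).
Hypothesis L_multilinear : multilinear L.
Variables (a h : E).

Let first_on_line (m : nat) (t : K) (u : 'I_k -> E) : 'I_k -> E :=
  fun j => if (j < m)%N then a + t *: h else u j.

Lemma multilinear_first_on_lineS m t u (i : 'I_k) : val i = m ->
  L (first_on_line m.+1 t u) =
  t * L (first_on_line m t (upd_arg u i h))
  + L (first_on_line m t (upd_arg u i a)).
Proof.
move=> im.
have upd_first x :
    upd_arg (first_on_line m t u) i x = first_on_line m t (upd_arg u i x).
  apply/funext => j; rewrite /first_on_line /upd_arg.
  by case: eqVneq => [->|//]; rewrite im ltnn.
rewrite -!upd_first -L_multilinear; congr L; apply/funext => j.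
rewrite /upd_arg /first_on_line ltnS leq_eqVlt -im.
case: (eqVneq j i) => [->|ne]; first by rewrite !eqxx addrC.
by rewrite val_eqE (negbTE ne).
Qed.

Lemma polyfun_le_first_on_line m : (m <= k)%N ->
  forall u, polyfun_le m (fun t => L (first_on_line m t u)).
Proof.
elim: m => [_ u|m IHm mk u].
  apply: eq_polyfun_le (polyfun_le_cst 0 (L u)) => t.
  by congr L; apply/funext.
apply: eq_polyfun_le (fun t => esym (multilinear_first_on_lineS t u
                                       (i := Ordinal mk) erefl)) _.
apply: polyfun_leD; first exact/polyfun_le_mulX/IHm/ltnW.
exact/(polyfun_le_widen (leqnSn m))/IHm/ltnW.
Qed.

Lemma polyfun_le_multilinear_diag : polyfun_le k (fun t => L (fun=> a + t *: h)).
Proof.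
apply: eq_polyfun_le (polyfun_le_first_on_line (leqnn k) (fun=> a)) => t.
by congr L; apply/funext => j; rewrite /first_on_line ltn_ord.
Qed.

End MultilinearAlongLines.

Lemma polynomial_polyfun_line (K : numFieldType) (E : lmodType K) (P : E -> K) :
  is_polynomial P -> exists n, forall a h, polyfun_le n (fun t => P (a + t *: h)).
Proof.
move=> [n [c [Q [Q_hom PE]]]]; exists n => a h.
apply: eq_polyfun_le (fun t => esym (PE (a + t *: h))) _.
apply: polyfun_leD; first exact: polyfun_le_cst.
apply: polyfun_le_sum => j; rewrite mem_index_iota => jn _.
have [L [L_multilinear _ QL]] := Q_hom j jn.
apply: eq_polyfun_le (fun t => esym (QL _)) _.
apply: polyfun_le_widen (polyfun_le_multilinear_diag L_multilinear a h).
by case/andP: jn.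
Qed.

Lemma cvg_of_ball_bounded (K : numFieldType) (E : normedModType K) (P : E -> K)
    n a r M :
  (forall a h, polyfun_le n (fun t => P (a + t *: h))) ->
  0 < r -> (forall y, ball a r y -> `|P y| <= M) -> P y @[y --> a] --> P a.
Proof.
move=> P_lines r0 PM.
have [om [om0 om_ge0 om_bound]] := polyfun_le_increment_bound K n.
pose rho := r / n.+1%:R.
have rho0 : 0 < rho by rewrite divr_gt0.
have M0 : 0 <= M := le_trans (normr_ge0 _) (PM a (ballxx a r0)).
have PaM y : `|P y - P a| <= M * om (`|y - a| / rho).
  have [->|ya] := eqVneq y a; first by rewrite subrr normr0 mulr_ge0.
  set t := `|y - a| / rho.
  have t0 : 0 < t by rewrite divr_gt0 // normr_gt0 subr_eq0.
  pose h := t^-1 *: (y - a).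
  have normh : `|h| = rho.
    rewrite normrZ normfV gtr0_norm // /t invfM invrK mulrAC mulVf ?mul1r //.
    by rewrite normr_eq0 subr_eq0.
  have -> : P y = P (a + t *: h).
    by rewrite scalerA mulfV ?gt_eqF // scale1r addrC subrK.
  have -> : P a = P (a + 0 *: h) by rewrite scale0r addr0.
  apply: (om_bound (fun s => P (a + s *: h))) => // i; apply: PM.
  (* the nodes a + i h, i <= n, stay within distance n rho < r of a *)
  rewrite -ball_normE /= opprD addrA subrr add0r normrN normrZ normh normr_nat.
  rewrite /rho mulrA ltr_pdivrMr ?ltr0n // mulrC ltr_pM2l // ltr_nat.
  exact: ltn_ord.
have dist0 : `|y - a| / rho @[y --> a] --> `|a - a| / rho.
  apply: cvgM; last exact: cvg_cst.
  by apply: cvg_norm; apply: cvgB; [exact: cvg_id | exact: cvg_cst].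
rewrite subrr normr0 mul0r in dist0.
have om_near : M * om (`|y - a| / rho) @[y --> a] --> 0.
  rewrite -(mulr0 M); apply: cvgM; first exact: cvg_cst.
  exact: cvg_comp dist0 om0.
apply/cvgrPdist_lt => e e0; move/cvgrPdist_lt: om_near => /(_ e e0).
apply: filterS => y; rewrite sub0r normrN ger0_norm ?mulr_ge0 // => lt_e.
by rewrite distrC; apply: le_lt_trans (PaM y) _.
Qed.

Lemma compact_cvg_range (T : topologicalType) (x : nat -> T) (a : T) :
  x @ \oo --> a -> compact ([set a] `|` range x).
Proof.
move=> xa F PF FA.
have [clFa|nclFa] := pselect (cluster F a); first by exists a; split => //; left.
have [B [C [FB Ca BC]]] :
    exists B C, [/\ F B, nbhs a C & forall z, B z -> ~ C z].
  apply: contrapT => nBC; apply: nclFa => B C FB Ca.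
  apply: contrapT => nBC'; apply: nBC; exists B, C; split => // z Bz Cz.
  by apply: nBC'; exists z.
have [N _ xC] := xa C Ca.
(* F lives on the finitely many x m, m < N, which avoid the neighbourhood C *)
have F_init : F (x @` `I_N).
  apply: filterS (filterI FA FB) => _ [[->|[m _ <-]] Bz].
    by case: (BC a Bz (nbhs_singleton Ca)).
  have [mN|Nm] := ltnP m N; first by exists m.
  by case: (BC _ Bz (xC m Nm)).
have [_ [[m _ <-] clF]] :=
  finite_compact (finite_image x (finite_II N)) PF F_init.
by exists (x m); split => //; right; exists m.
Qed.

Definition archimedean_norm (K : numFieldType) :=
  forall z : K, exists m : nat, `|z| < m%:R.

Section Archimedean.
Variable K : numFieldType.
Hypothesis archK : archimedean_norm K.

Lemma compact_norm_bounded_nat (S : set K) : compact S ->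
  exists N : nat, forall z, S z -> `|z| < N%:R.
Proof.
rewrite compact_cover => Sco.
have /Sco[] : S `<=` \bigcup_(m in [set: nat]) [set z : K | `|z| < m%:R].
  by move=> z _; have [m zm] := archK z; exists m.
  move=> m _; rewrite openE => z /= zm.
  apply/nbhs_ballP; exists (m%:R - `|z|) => [|w]; first by rewrite /= subr_gt0.
  rewrite -ball_normE /= ltrBrDr distrC; apply: le_lt_trans.
  by rewrite -{1}(subrK z w) ler_normD.
move=> D _ DS; exists (\max_(m <- finmap.enum_fset D) m)%N => z /DS[m Dm] /= zm.
apply: lt_le_trans zm _; rewrite ler_nat.
exact: (@leq_bigmax_seq _ (finmap.enum_fset D) xpredT id m Dm).
Qed.

Lemma cvg_ball_inv_succ (E : normedModType K) (x : nat -> E) (a : E) :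
  (forall m, ball a m.+1%:R^-1 (x m)) -> x @ \oo --> a.
Proof.
move=> xa; apply/cvgrPdist_lt => e e0.
have [N Ne] := archK e^-1; exists N => // m /= Nm.
move: (xa m); rewrite -ball_normE /= => /lt_trans; apply.
rewrite -[ltRHS]invrK ltf_pV2 ?posrE ?ltr0n ?invr_gt0 //.
rewrite gtr0_norm ?invr_gt0 // in Ne.
by apply: lt_le_trans Ne _; rewrite ler_nat; exact: leqW.
Qed.

Lemma polynomial_continuous_compact_images (E : normedModType K) (P : E -> K) :
  is_polynomial P ->
  (continuous P <-> (forall A : set E, compact A -> compact (P @` A))).
Proof.
move=> /polynomial_polyfun_line[n P_lines]; split.
  move=> P_cont A A_compact; apply: continuous_compact => //.
  by apply: continuous_subspaceT => x; exact: P_cont.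
move=> P_compact a.
have [[r [M [r0 PM]]]|P_unbounded] :=
  pselect (exists r M, 0 < r /\ forall y, ball a r y -> `|P y| <= M).
  exact: cvg_of_ball_bounded P_lines r0 PM.
have /choice[x xP] : forall m : nat,
    exists y, ball a m.+1%:R^-1 y /\ m%:R < `|P y|.
  move=> m; apply: contrapT => nx; apply: P_unbounded.
  exists m.+1%:R^-1, m%:R; split => [|y ay]; first by rewrite invr_gt0 ltr0n.
  rewrite real_leNgt ?realn ?normr_real //; apply/negP => Pym.
  by apply: nx; exists y.
have xa : x @ \oo --> a by apply: cvg_ball_inv_succ => m; exact: (xP m).1.
have [N PN] := compact_norm_bounded_nat (P_compact _ (compact_cvg_range xa)).
have /PN : (P @` ([set a] `|` range x)) (P (x N)).
  by exists (x N) => //; right; exists N.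
by move/(lt_trans (xP N).2); rewrite ltxx.
Qed.

End Archimedean.

Lemma archimedean_norm_real (R : realType) : archimedean_norm R.
Proof.
by move=> z; exists (Num.truncn `|z|).+1; rewrite archimedean.Num.Theory.truncnS_gt.
Qed.

Lemma archimedean_norm_complex (R : realType) : archimedean_norm R[i].
Proof.
move=> z.
have [m zm] :=
  archimedean_norm_real (Num.sqrt (complex.Re z ^+ 2 + complex.Im z ^+ 2)).
exists m; rewrite normc_def -(rmorph_nat (real_complex R)) ltcR.
exact: le_lt_trans (ler_norm _) zm.
Qed.

Theorem theorem2p1 (R : realType) :
  poly_cont_iff_compact_images R /\ poly_cont_iff_compact_images R[i].
Proof.
split=> E P; apply: polynomial_continuous_compact_images.
  exact: archimedean_norm_real.
exact: archimedean_norm_complex.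
Qed.
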